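(* Let $0<r_j\le\infty$ and $0<s_j\le\infty$ for $j=1,\dots,n$, and let $\gamma(\mathbf{r})=\otimes_{j=1}^n\gamma(r_j)$ and $\gamma(\mathbf{s})=\otimes_{j=1}^n\gamma(s_j)$ be thermal states with $\operatorname{supp}\gamma(\mathbf{r})\subseteq\operatorname{supp}\gamma(\mathbf{s})$. Let $\mathcal{F}_{\mathbf{r}}=\{j\in\{1,\dots,n\}: r_j<\infty\}$, $\mathcal{F}_{\mathbf{s}}=\{j: s_j<\infty\}$, and $\mathcal{F}_{\mathbf{r}<\mathbf{s}}=\{j\in\mathcal{F}_{\mathbf{r}}\cap\mathcal{F}_{\mathbf{s}}: r_j<s_j\}$. Then: (1) If $\mathcal{F}_{\mathbf{r}<\mathbf{s}}=\emptyset$ (i.e. $r_j\ge s_j$ for all $j\in\mathcal{F}_{\mathbf{r}}\cap\mathcal{F}_{\mathbf{s}}$), then $D_\alpha(\gamma(\mathbf{r})\|\gamma(\mathbf{s}))<\infty$ for every $\alpha\in(0,1)\cup(1,\infty)$. (2) If $\mathcal{F}_{\mathbf{r}<\mathbf{s}}\neq\emptyset$, then for $\alpha\in(0,1)\cup(1,\infty)$, $$D_\alpha(\gamma(\mathbf{r})\|\gamma(\mathbf{s}))<\infty\iff \alpha<\min_{j\in\mathcal{F}_{\mathbf{r}<\mathbf{s}}}\frac{s_j}{s_j-r_j}.$$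
   Context: One-mode Fock space: $\ell^2(\mathbb{Z}_{\ge 0})$ with orthonormal particle basis $\{|k\rangle\}_{k\ge0}$; the $n$-mode space is the $n$-fold tensor product with basis $|\mathbf{k}\rangle=|k_1\rangle\otimes\cdots\otimes|k_n\rangle$. For $0<s<\infty$ the one-mode thermal state is $\gamma(s)=(1-e^{-s})\sum_{k\ge0}e^{-ks}|k\rangle\langle k|$, and $\gamma(\infty)=|0\rangle\langle0|$. $\operatorname{supp}$ denotes the support (orthogonal complement of the kernel). For states $\rho=\sum_i p_i|x_i\rangle\langle x_i|$, $\sigma=\sum_j q_j|y_j\rangle\langle y_j|$ (spectral decompositions with orthonormal bases), the Petz–Rényi $\alpha$-relative entropy for $\alpha\in(0,1)\cup(1,\infty)$ is $D_\alpha(\rho\|\sigma)=\frac{1}{\alpha-1}\log\sum_{i,j}p_i^\alpha q_j^{1-\alpha}|\langle x_i|y_j\rangle|^2$, with the conventions (for $\alpha>1$) $0^{1-\alpha}=\infty$ and $0\cdot\infty=0$. *)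

From HB Require Import structures.
From mathcomp Require Import all_boot all_order all_algebra.
From mathcomp Require Import all_classical all_reals all_analysis.
Set Implicit Arguments. Unset Strict Implicit. Unset Printing Implicit Defensive.
Import Order.TTheory GRing.Theory Num.Theory.
Local Open Scope ring_scope.
Local Open Scope classical_set_scope.

Section Defs.
Variable R : realType.

Definition elog (x : \bar R) : \bar R :=
  match x with
  | r%:E => if 0 < r then (ln r)%:E else -oo%E
  | +oo%E => +oo%E
  | -oo%E => -oo%E
  end.

Definition qpow (alpha q : R) : \bar R :=
  if 0 < q then (q `^ (1 - alpha))%:E
  else if 1 < alpha then +oo%E else 0%E.

(* Petz--Renyi alpha-relative entropy of rho = sum_i p_i |x_i><x_i| and
   sigma = sum_j q_j |y_j><y_j| (spectral decompositions in orthonormal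
   bases {x_i}_{i:I}, {y_j}_{j:J}), where W i j = |<x_i|y_j>|^2 :
   D_alpha = 1/(alpha-1) log sum_{i,j} p_i^alpha q_j^(1-alpha) |<x_i|y_j>|^2,
   with 0^(1-alpha) = oo (alpha > 1) and 0 * oo = 0. *)
Definition petz_renyi {I J : choiceType} (alpha : R)
    (p : I -> R) (q : J -> R) (W : I -> J -> R) : \bar R :=
  let term (ij : I * J) : \bar R :=
    if (p ij.1 == 0) || (W ij.1 ij.2 == 0) then 0%E
    else ((p ij.1 `^ alpha)%:E * (W ij.1 ij.2)%:E * qpow alpha (q ij.2))%E in
  ((alpha - 1)^-1)%:E * elog (esum [set: I * J] term).

(* Particle-number basis of the n-mode Fock space: |k> = |k_1> (x) ... (x) |k_n>. *)
Definition fock_index (n : nat) := {ffun 'I_n -> nat}.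

(* |<k|k'>|^2 for the orthonormal particle basis. *)
Definition fock_overlap (n : nat) (k k' : fock_index n) : R :=
  if k == k' then 1 else 0.

(* Eigenvalue of the one-mode thermal state gamma(s) on |k>, s in (0, +oo]:
   gamma(s) = (1 - e^{-s}) sum_k e^{-ks} |k><k|,  gamma(+oo) = |0><0|. *)
Definition thermal_ev (s : \bar R) (k : nat) : R :=
  match s with
  | x%:E => (1 - expR (- x)) * expR (- (k%:R * x))
  | +oo%E => if k == 0%N then 1 else 0
  | -oo%E => 0
  end.

Definition thermal (n : nat) (s : 'I_n -> \bar R) (k : fock_index n) : R :=
  \prod_(j < n) thermal_ev (s j) (k j).

(* Support of a state diagonal in the Fock basis, recorded by the set of
   basis vectors |k> with nonzero eigenvalue (supp = their closed span). *)
Definition diag_supp (n : nat) (p : fock_index n -> R) : set (fock_index n) :=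
  [set k | p k != 0].

Definition D_thermal (n : nat) (alpha : R) (r s : 'I_n -> \bar R) : \bar R :=
  petz_renyi alpha (thermal r) (thermal s) (@fock_overlap n).

Definition Ffin (n : nat) (s : 'I_n -> \bar R) : {set 'I_n} :=
  [set j | (s j < +oo)%E].

Definition Flt (n : nat) (r s : 'I_n -> \bar R) : {set 'I_n} :=
  [set j in Ffin r :&: Ffin s | (r j < s j)%E].

End Defs.

From HB Require Import structures.
From mathcomp Require Import all_boot all_order all_algebra.
From mathcomp Require Import all_classical all_reals all_analysis.
From mathcomp Require Import ring lra.
From mathcomp Require finmap.
Import Order.TTheory GRing.Theory Num.Theory.
Local Open Scope ring_scope.
Local Open Scope classical_set_scope.
Set Implicit Arguments. Unset Strict Implicit. Unset Printing Implicit Defensive.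

(* Both states are diagonal in the Fock basis, so the Petz sum is
   sum_k prod_j p_j(k_j)^alpha q_j(k_j)^(1-alpha), and its finite partial sums
   are bounded by products of one-mode partial sums.  If r_j and s_j are finite,
   the j-th one-mode sum is geometric with ratio
   exp (-(alpha r_j + (1 - alpha) s_j)); if one of them is infinite, only the
   vacuum term survives.  So the sum is finite iff alpha r_j + (1 - alpha) s_j > 0
   for every mode with r_j, s_j finite; otherwise exciting the offending mode
   alone yields infinitely many terms at least as large as the vacuum term.
   The vacuum term also makes the sum positive, so D_alpha is finite iff either
   alpha < 1 or the sum is finite.  Finally the exponent is always positive for
   alpha < 1 or r_j >= s_j, and for r_j < s_j it is positive iff
   alpha < s_j / (s_j - r_j). *)

Section Sums.
Variable R : realType.

Lemma powR_prod (I : Type) (rs : seq I) (P : pred I) (F : I -> R) c :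
  (forall i, P i -> 0 <= F i) ->
  (\prod_(i <- rs | P i) F i) `^ c = \prod_(i <- rs | P i) F i `^ c.
Proof.
move=> F0; elim: rs => [|i rs IH]; first by rewrite !big_nil powR1.
rewrite !big_cons; case: ifP => Pi //.
by rewrite powRM ?F0 ?IH // prodr_ge0.
Qed.

Lemma geometric_partial_sum_le (a x : R) N : 0 <= a -> 0 < x < 1 ->
  \sum_(m < N) a * x ^+ m <= a / (1 - x).
Proof.
move=> a0 /andP[x0 x1]; rewrite -(big_mkord xpredT (geometric a x)).
by apply: geometric_le_lim; rewrite // ger0_norm ?ltW.
Qed.

Lemma sum_prod_ffun_le n (f : 'I_n -> nat -> R) (B : 'I_n -> R)
    (ks : seq {ffun 'I_n -> nat}) :
  (forall j m, 0 <= f j m) -> (forall j N, \sum_(m < N) f j m <= B j) ->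
  uniq ks -> \sum_(k <- ks) \prod_(j < n) f j (k j) <= \prod_(j < n) B j.
Proof.
move=> f0 fB uks.
set N := \max_(k <- ks) \max_(j < n) k j.
have ltN k j : k \in ks -> (k j < N.+1)%N.
  move=> kks; rewrite ltnS (leq_trans (leq_bigmax j)) //.
  exact: (leq_bigmax_seq (F := fun k : {ffun 'I_n -> nat} => \max_(j < n) k j)).
pose emb (phi : {ffun 'I_n -> 'I_N.+1}) := [ffun j => nat_of_ord (phi j)].
pose proj (k : {ffun 'I_n -> nat}) : {ffun 'I_n -> 'I_N.+1} :=
  [ffun j => inord (k j)].
have projK : {in ks, cancel proj emb}.
  by move=> k kks; apply/ffunP => j; rewrite !ffunE inordK ?ltN.
rewrite (eq_big_seq (fun k => \prod_(j < n) f j (emb (proj k) j))); last first.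
  by move=> k /projK ->.
rewrite -(big_map proj predT (fun phi => \prod_(j < n) f j (emb phi j))).
have uproj : uniq (map proj ks).
  rewrite map_inj_in_uniq // => k k' /projK + /projK + ekk'.
  by move=> <- <-; rewrite ekk'.
apply: (@le_trans _ _ (\sum_phi \prod_(j < n) f j (emb phi j))).
  rewrite big_uniq //= [X in _ <= X](bigID (mem (map proj ks))) /= lerDl.
  by apply: sumr_ge0 => phi _; exact: prodr_ge0.
under eq_bigr do under eq_bigr do rewrite ffunE.
rewrite -(bigA_distr_bigA (fun j (m : 'I_N.+1) => f j m)).
by apply: ler_prod => j _; rewrite sumr_ge0 //= fB.
Qed.

Lemma esum_pinfty_of_injective (T : choiceType) (f : T -> R) (u : nat -> T) c :
  0 < c -> injective u -> (forall t, 0 <= f t) -> (forall m, c <= f (u m)) ->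
  \esum_(t in [set: T]) (f t)%:E = +oo%E.
Proof.
move=> c0 uinj f0 cu; apply: eq_infty => z.
have : (\esum_(t in range u) (f t)%:E <= \esum_(t in [set: T]) (f t)%:E)%E.
  rewrite [X in (X <= _)%E]esum_mkcond; apply: le_esum => t _.
  by case: ifPn => // _; rewrite lee_fin f0.
rewrite esum_set_image; last 2 first.
- by move=> m _; rewrite lee_fin f0.
- by move=> m m' _ _; exact: uinj.
apply: le_trans.
set M := Num.bound (`|z| / c).
apply: (le_trans _ (nneseries_lim_ge M _)); last by move=> m _ _; rewrite lee_fin.
rewrite sumEFin lee_fin (le_trans (ler_norm z)) //.
rewrite (eq_bigl xpredT); last by move=> m; rewrite in_setT.
apply: (@le_trans _ _ (\sum_(0 <= m < M) c)); last exact: ler_sum.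
rewrite sumr_const_nat subn0 -mulr_natl -ler_pdivrMr //.
exact/ltW/archi_boundP/divr_ge0/ltW.
Qed.

End Sums.

Section OneMode.
Variable R : realType.
Implicit Types (a b : \bar R) (alpha x y : R).

Lemma thermal_ev_ge0 a m : (0 < a)%E -> 0 <= thermal_ev a m.
Proof.
case: a => [x| |] //= x0; last by case: eqP.
by rewrite mulr_ge0 ?expR_ge0 // subr_ge0 ltW // expR_lt1 oppr_lt0 -lte_fin.
Qed.

Lemma thermal_ev0_gt0 a : (0 < a)%E -> 0 < thermal_ev a 0.
Proof.
case: a => [x| |] //= x0.
by rewrite mulr_gt0 ?expR_gt0 // subr_gt0 expR_lt1 oppr_lt0 -lte_fin.
Qed.

Definition renyi_mode_term alpha a b m : R :=
  thermal_ev a m `^ alpha * thermal_ev b m `^ (1 - alpha).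

Lemma renyi_mode_term_ge0 alpha a b m : 0 <= renyi_mode_term alpha a b m.
Proof. by rewrite mulr_ge0 ?powR_ge0. Qed.

Lemma renyi_mode_term0_gt0 alpha a b :
  (0 < a)%E -> (0 < b)%E -> 0 < renyi_mode_term alpha a b 0.
Proof. by move=> a0 b0; rewrite mulr_gt0 ?powR_gt0 ?thermal_ev0_gt0. Qed.

Lemma renyi_mode_term_geometric alpha x y m : 0 < x -> 0 < y ->
  renyi_mode_term alpha x%:E y%:E m =
  renyi_mode_term alpha x%:E y%:E 0 * expR (- (alpha * x + (1 - alpha) * y)) ^+ m.
Proof.
move=> x0 y0; have e_ge0 z : 0 < z -> 0 <= 1 - expR (- z).
  by move=> z0; rewrite subr_ge0 ltW // expR_lt1 oppr_lt0.
rewrite /renyi_mode_term /= !powRM ?expR_ge0 ?e_ge0 // -!expRM !mul0r !oppr0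
  !mul0r !expR0 !mulr1 -expRM_natl.
have -> : expR (m%:R * - (alpha * x + (1 - alpha) * y)) =
    expR (- (m%:R * x) * alpha) * expR (- (m%:R * y) * (1 - alpha)).
  by rewrite -expRD; congr expR; ring.
ring.
Qed.

Lemma renyi_mode_term_vacuum alpha a b m : 0 < alpha -> alpha != 1 ->
  (a == +oo%E) || (b == +oo%E) -> (0 < m)%N -> renyi_mode_term alpha a b m = 0.
Proof.
move=> al0 al1 ab; case: m => // m _; rewrite /renyi_mode_term.
case/orP: ab => /eqP ->; rewrite /= powR0 ?mul0r ?mulr0 //.
- by rewrite gt_eqF.
- by rewrite subr_eq0 eq_sym.
Qed.

Definition renyi_exponent_pos alpha a b :=
  forall x y, a = x%:E -> b = y%:E -> 0 < alpha * x + (1 - alpha) * y.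

Lemma renyi_mode_term_le_geometric alpha a b : 0 < alpha -> alpha != 1 ->
  (0 < a)%E -> (0 < b)%E -> renyi_exponent_pos alpha a b ->
  exists2 x, 0 < x < 1 &
    forall m, renyi_mode_term alpha a b m <= renyi_mode_term alpha a b 0 * x ^+ m.
Proof.
move=> al0 al1 a0 b0 pos.
have [vac|] := boolP ((a == +oo%E) || (b == +oo%E)).
  exists 2^-1; first by rewrite invr_gt0 ltr0n invf_lt1 ?ltr0n ?ltr1n.
  case=> [|m]; first by rewrite mulr1.
  rewrite renyi_mode_term_vacuum //.
  by rewrite mulr_ge0 ?exprn_ge0 ?renyi_mode_term_ge0 ?invr_ge0.
move: a0 b0 pos; case: a => [x| |] //; case: b => [y| |] // x0 y0 pos _.
exists (expR (- (alpha * x + (1 - alpha) * y))).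
  by rewrite expR_gt0 expR_lt1 oppr_lt0 pos.
by move=> m; rewrite renyi_mode_term_geometric // -lte_fin.
Qed.

Lemma renyi_mode_sum_bounded alpha a b : 0 < alpha -> alpha != 1 ->
  (0 < a)%E -> (0 < b)%E -> renyi_exponent_pos alpha a b ->
  exists B, forall N, \sum_(m < N) renyi_mode_term alpha a b m <= B.
Proof.
move=> al0 al1 a0 b0 pos.
have [x x01 le_geo] := renyi_mode_term_le_geometric al0 al1 a0 b0 pos.
exists (renyi_mode_term alpha a b 0 / (1 - x)) => N.
apply: le_trans (geometric_partial_sum_le _ (renyi_mode_term_ge0 _ _ _ _) x01).
exact: ler_sum.
Qed.

Lemma renyi_mode_term_ge_vacuum alpha x y m : 0 < x -> 0 < y ->
  alpha * x + (1 - alpha) * y <= 0 ->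
  renyi_mode_term alpha x%:E y%:E 0 <= renyi_mode_term alpha x%:E y%:E m.
Proof.
move=> x0 y0 neg; rewrite [leRHS]renyi_mode_term_geometric //.
rewrite ler_peMr ?renyi_mode_term_ge0 // exprn_ege1 //.
by rewrite leNgt expR_lt1 -leNgt oppr_ge0.
Qed.

Lemma renyi_exponent_pos_iff alpha x y : 0 < alpha -> 0 < x -> 0 < y ->
  0 < alpha * x + (1 - alpha) * y <-> (x < y -> alpha < y / (y - x)).
Proof.
move=> al0 x0 y0; split=> [pos xy | lt].
  by rewrite ltr_pdivlMr ?subr_gt0 //; nra.
have [xy|yx] := ltP x y; last by nra.
by move: (lt xy); rewrite ltr_pdivlMr ?subr_gt0 //; nra.
Qed.

End OneMode.

Section ThermalRenyi.
Variables (R : realType) (n : nat) (alpha : R) (r s : 'I_n -> \bar R).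
Hypotheses (hr : forall j, (0 < r j)%E) (hs : forall j, (0 < s j)%E).
Hypothesis al0 : 0 < alpha.

Definition renyi_summand (k : fock_index n) : R :=
  \prod_(j < n) renyi_mode_term alpha (r j) (s j) (k j).

Definition renyi_sum : \bar R :=
  \esum_(k in [set: fock_index n]) (renyi_summand k)%:E.

Lemma renyi_summand_ge0 k : 0 <= renyi_summand k.
Proof. by apply: prodr_ge0 => j _; exact: renyi_mode_term_ge0. Qed.

Lemma renyi_summandE k :
  renyi_summand k = thermal r k `^ alpha * thermal s k `^ (1 - alpha).
Proof.
rewrite /renyi_summand /renyi_mode_term big_split /thermal !powR_prod // => j _.
all: exact: thermal_ev_ge0.
Qed.

Lemma D_thermal_renyi_sum :
  diag_supp (thermal r) `<=` diag_supp (thermal s) ->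
  D_thermal alpha r s = (((alpha - 1)^-1)%:E * elog renyi_sum)%E.
Proof.
move=> hsupp; rewrite /D_thermal /petz_renyi /renyi_sum; congr (_ * elog _)%E.
rewrite -(esum_image setT (fun k => (k, k)) (fun kk => (renyi_summand kk.1)%:E));
  last by move=> k k' _ _ [].
rewrite [RHS]esum_mkcond; apply: eq_esum => -[k k'] _ /=.
have [<-|neq] := eqVneq k k'; last first.
  rewrite /fock_overlap (negbTE neq) eqxx orbT.
  case: ifPn => // /set_mem [x _ [ek ek']].
  by move: neq; rewrite -ek -ek' eqxx.
rewrite [in RHS]ifT; last by apply/mem_set; exists k.
rewrite /fock_overlap eqxx oner_eq0 orbF renyi_summandE.
have [/eqP p0|p0] := ifPn; first by rewrite p0 powR0 ?mul0r // gt_eqF.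
(* The support inclusion keeps the convention 0 ^ (1 - alpha) = +oo out of play. *)
have q_gt0 : 0 < thermal s k.
  by rewrite lt_def hsupp //= prodr_ge0 // => j _; exact: thermal_ev_ge0.
by rewrite /qpow q_gt0 mule1 EFinM.
Qed.

Definition vacuum : fock_index n := [ffun => 0%N].

Lemma renyi_summand_vacuum_gt0 : 0 < renyi_summand vacuum.
Proof. by apply: prodr_gt0 => j _; rewrite ffunE renyi_mode_term0_gt0. Qed.

Lemma renyi_sum_gt0 : (0 < renyi_sum)%E.
Proof.
apply: lt_le_trans (renyi_summand_vacuum_gt0 : (0 < _%:E)%E) _.
apply: esum_ge; exists [set vacuum]; first by split=> //; exact: finite_set1.
by rewrite fsbig_set1.
Qed.

Lemma renyi_sum_bounded : alpha != 1 ->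
  (forall j, renyi_exponent_pos alpha (r j) (s j)) ->
  exists B, (renyi_sum <= B%:E)%E.
Proof.
move=> al1 pos.
have /choice [B hB] j := renyi_mode_sum_bounded al0 al1 (hr j) (hs j) (pos j).
exists (\prod_(j < n) B j).
rewrite /renyi_sum /esum ge_ereal_sup //= => _ [X [finX _]] <-.
rewrite fsbig_finite // sumEFin lee_fin.
apply: (sum_prod_ffun_le (f := fun j => renyi_mode_term alpha (r j) (s j))) hB _.
  by move=> j m; exact: renyi_mode_term_ge0.
exact: finmap.fset_uniq.
Qed.

Lemma renyi_sum_pinfty j x y : r j = x%:E -> s j = y%:E ->
  alpha * x + (1 - alpha) * y <= 0 -> renyi_sum = +oo%E.
Proof.
move=> rj sj neg.
have x0 : 0 < x by rewrite -lte_fin -rj.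
have y0 : 0 < y by rewrite -lte_fin -sj.
pose excite (m : nat) : fock_index n := [ffun i => if i == j then m else 0%N].
apply: (esum_pinfty_of_injective renyi_summand_vacuum_gt0 (u := excite)).
- by move=> m m' /(congr1 (fun k : fock_index n => k j)); rewrite /= !ffunE eqxx.
- exact: renyi_summand_ge0.
- move=> m; apply: ler_prod => i _; rewrite renyi_mode_term_ge0 !ffunE.
  by case: eqP => [->|_] //=; rewrite rj sj renyi_mode_term_ge_vacuum.
Qed.

Lemma D_thermal_lt_pinfty_iff :
  diag_supp (thermal r) `<=` diag_supp (thermal s) -> alpha != 1 ->
  (D_thermal alpha r s < +oo)%E <-> forall j, renyi_exponent_pos alpha (r j) (s j).
Proof.
move=> hsupp al1; rewrite D_thermal_renyi_sum //.
split=> [D_fin j x y rj sj | pos].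
  have x0 : 0 < x by rewrite -lte_fin -rj.
  have y0 : 0 < y by rewrite -lte_fin -sj.
  have [gt1|le1] := ltP 1 alpha; last first.
    by rewrite ltr_wpDr ?mulr_gt0 // mulr_ge0 ?subr_ge0 // ltW.
  rewrite ltNge; apply/negP => neg.
  move: D_fin; rewrite (renyi_sum_pinfty rj sj neg) /= gt0_muley ?ltxx //.
  by rewrite lte_fin invr_gt0 subr_gt0.
have [B le_B] := renyi_sum_bounded al1 pos.
have S_gt0 := renyi_sum_gt0.
have S_fin : renyi_sum \is a fin_num.
  by rewrite ge0_fin_numE ?(le_lt_trans le_B) ?ltry // ltW.
by rewrite -(fineK S_fin) /= fine_gt0 ?S_gt0 ?(le_lt_trans le_B) ?ltry.
Qed.

Lemma renyi_exponent_pos_Flt_iff :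
  (forall j, renyi_exponent_pos alpha (r j) (s j)) <->
  (forall j, j \in Flt r s ->
     (alpha%:E < (fine (s j) / (fine (s j) - fine (r j)))%:E)%E).
Proof.
split=> [pos j | lt j x y rj sj].
  rewrite !inE => /andP[/andP[r_fin s_fin] rs].
  move: (hr j) (hs j) r_fin s_fin rs (pos j).
  case: (r j) => [x| |] //; case: (s j) => [y| |] //.
  rewrite !lte_fin => x0 y0 _ _ xy /(_ x y erefl erefl).
  by move/(renyi_exponent_pos_iff al0 x0 y0); apply.
have x0 : 0 < x by rewrite -lte_fin -rj.
have y0 : 0 < y by rewrite -lte_fin -sj.
apply/(renyi_exponent_pos_iff al0 x0 y0) => xy.
by move: (lt j); rewrite !inE rj sj !ltry lte_fin xy => /(_ isT); rewrite lte_fin.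
Qed.

End ThermalRenyi.

Theorem theorem3p1 (R : realType) (n : nat) (r s : 'I_n -> \bar R)
    (hr : forall j, (0 < r j)%E) (hs : forall j, (0 < s j)%E)
    (hsupp : diag_supp (thermal r) `<=` diag_supp (thermal s)) :
  (Flt r s = finset.set0 ->
     forall alpha : R, 0 < alpha -> alpha != 1 ->
       (D_thermal alpha r s < +oo)%E) /\
  (Flt r s != finset.set0 ->
     forall alpha : R, 0 < alpha -> alpha != 1 ->
       ((D_thermal alpha r s < +oo)%E <->
        (alpha%:E < \big[Order.min/+oo%E]_(j in Flt r s)
                      ((fine (s j) / (fine (s j) - fine (r j)))%:E))%E)).
Proof.
(* The characterization in the second part does not need Flt r s to be
   nonempty: the empty minimum is +oo. *)
split=> [Flt0 | _] alpha al0 al1;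
  rewrite (D_thermal_lt_pinfty_iff hr hs al0 hsupp al1)
          (renyi_exponent_pos_Flt_iff hr hs al0).
  by move=> j; rewrite Flt0 inE.
split=> [lt | /bigmin_gtP[_ //]].
by apply/bigmin_gtP; split; [exact: ltry | exact: lt].
Qed.
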